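(* Let $R$ be an arithmetic ring of Krull dimension $0$. Then $R$ is a Kaplansky ring and an adequate ring.
   Context: All rings are commutative with identity. $R$ is arithmetic if $R_M$ is a valuation ring (ideals totally ordered by inclusion) for every maximal ideal $M$. $R$ is Bézout if every finitely generated ideal is principal. $R$ is a Kaplansky ring (elementary divisor ring) if for every matrix $A$ over $R$ there exist invertible matrices $P,Q$ and a diagonal matrix $D$ over $R$ such that $PAQ=D$. $R$ is adequate if it is Bézout and for every $a,b\in R$ with $a\neq 0$ there exist $r,s\in R$ with $a=rs$, $Rr+Rb=R$, and $Rs'+Rb\neq R$ for every nonunit $s'$ dividing $s$. *)

From HB Require Import structures.
From mathcomp Require Import all_boot all_order all_algebra.
Set Implicit Arguments. Unset Strict Implicit. Unset Printing Implicit Defensive.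
Import GRing.Theory.
Local Open Scope ring_scope.

Definition is_ideal (R : comNzRingType) (I : R -> Prop) : Prop :=
  [/\ I 0, (forall x y, I x -> I y -> I (x + y)) & (forall a x, I x -> I (a * x))].

Definition prime_ideal (R : comNzRingType) (P : R -> Prop) : Prop :=
  [/\ is_ideal P, ~ P 1 & (forall a b, P (a * b) -> P a \/ P b)].

Definition maximal_ideal (R : comNzRingType) (M : R -> Prop) : Prop :=
  [/\ is_ideal M, ~ M 1 &
      (forall J : R -> Prop, is_ideal J -> (forall x, M x -> J x) ->
         J 1 \/ (forall x, J x -> M x))].

(* Krull dimension 0 : there is no chain P0 < P1 of prime ideals
   (R is nonzero, so it has a prime ideal). *)
Definition krull_dim0 (R : comNzRingType) : Prop :=
  forall P Q : R -> Prop, prime_ideal P -> prime_ideal Q ->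
    (forall x, P x -> Q x) -> forall x, Q x -> P x.

(* The localization R_M at a maximal ideal M, described concretely:
   elements are fractions r/s with s not in M, and r/s = r'/s' iff
   t (r s' - r' s) = 0 for some t not in M. *)
Definition loc_eq (R : comNzRingType) (M : R -> Prop) (r s r' s' : R) : Prop :=
  exists t, ~ M t /\ t * (r * s' - r' * s) = 0.

(* An ideal of R_M, given as the set J of fractions (r, s) (with s not in M)
   that belong to it. *)
Definition loc_ideal (R : comNzRingType) (M : R -> Prop) (J : R -> R -> Prop)
  : Prop :=
  [/\ (forall r s, J r s -> ~ M s),
      (forall r s r' s', J r s -> ~ M s' -> loc_eq M r s r' s' -> J r' s'),
      J 0 1,
      (forall r s r' s', J r s -> J r' s' -> J (r * s' + r' * s) (s * s')) &
      (forall a u r s, ~ M u -> J r s -> J (a * r) (u * s))].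

Definition loc_valuation (R : comNzRingType) (M : R -> Prop) : Prop :=
  forall J K : R -> R -> Prop, loc_ideal M J -> loc_ideal M K ->
    (forall r s, J r s -> K r s) \/ (forall r s, K r s -> J r s).

Definition arithmetic (R : comNzRingType) : Prop :=
  forall M : R -> Prop, maximal_ideal M -> loc_valuation M.

Definition in_fg_ideal (R : comNzRingType) (s : seq R) (x : R) : Prop :=
  exists c : 'I_(size s) -> R, x = \sum_(i < size s) c i * s`_i.

Definition bezout (R : comNzRingType) : Prop :=
  forall s : seq R, exists d : R,
    forall x, in_fg_ideal s x <-> exists c, x = c * d.

Definition invertible_mx (R : comNzRingType) (n : nat) (P : 'M[R]_n) : Prop :=
  exists P' : 'M[R]_n, P *m P' = 1%:M /\ P' *m P = 1%:M.

Definition is_diagonal (R : comNzRingType) (m n : nat) (D : 'M[R]_(m, n)) : Prop :=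
  forall (i : 'I_m) (j : 'I_n), (i : nat) <> j -> D i j = 0.

Definition kaplansky (R : comNzRingType) : Prop :=
  forall (m n : nat) (A : 'M[R]_(m, n)), exists (P : 'M[R]_m) (Q : 'M[R]_n),
    [/\ invertible_mx P, invertible_mx Q & is_diagonal (P *m A *m Q)].

Definition comaximal (R : comNzRingType) (x y : R) : Prop :=
  exists u v : R, u * x + v * y = 1.

Definition is_unit (R : comNzRingType) (x : R) : Prop := exists y : R, x * y = 1.

Definition divides (R : comNzRingType) (x y : R) : Prop := exists c : R, y = c * x.

Definition adequate (R : comNzRingType) : Prop :=
  bezout R /\
  forall a b : R, a <> 0 -> exists r s : R,
    [/\ a = r * s, comaximal r b &
        forall s' : R, ~ is_unit s' -> divides s' s -> ~ comaximal s' b].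

(* In a ring of Krull dimension 0 every element x is pi-regular, which yields an
   idempotent e in xR with x (1 - e) nilpotent. In an arithmetic ring, Jensen's
   criterion gives for all a, b some u with u a in bR and (1 - u) b in aR;
   splitting R along the idempotent attached to u produces an idempotent g such
   that g b + (1 - g) a generates aR + bR. This gives the Bezout property, and a
   diagonal reduction whose pivot steps mix, along such idempotents, the previous
   transformations with a transposition. Adequacy comes from splitting a along
   the idempotent attached to b. *)

From mathcomp Require Import all_boot all_order all_algebra.
From mathcomp Require Import ring perm.
From mathcomp Require Import boolp classical_sets.
Set Implicit Arguments. Unset Strict Implicit. Unset Printing Implicit Defensive.
Import GRing.Theory.
Local Open Scope classical_set_scope.
Local Open Scope ring_scope.

Section Ideals.
Variable R : comNzRingType.
Implicit Types (S I J M : R -> Prop) (x y a b : R).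

Lemma ideal0 I : is_ideal I -> I 0.
Proof. by case. Qed.

Lemma idealD I x y : is_ideal I -> I x -> I y -> I (x + y).
Proof. by case=> _ hD _; apply: hD. Qed.

Lemma idealMl I a x : is_ideal I -> I x -> I (a * x).
Proof. by case=> _ _ hM; apply: hM. Qed.

Lemma idealMr I a x : is_ideal I -> I x -> I (x * a).
Proof. by move=> hI hx; rewrite mulrC; apply: idealMl. Qed.

Definition ideal_adjoin M a : R -> Prop :=
  fun z => exists m r, M m /\ z = m + r * a.

Lemma ideal_adjoin_ideal M a : is_ideal M -> is_ideal (ideal_adjoin M a).
Proof.
move=> hM; split.
- by exists 0, 0; rewrite mul0r addr0; split => //; exact: ideal0.
- move=> _ _ [m [r [hm ->]]] [m' [r' [hm' ->]]].
  exists (m + m'), (r + r'); split; first exact: idealD.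
  by rewrite mulrDl !addrA (addrAC m).
- move=> c _ [m [r [hm ->]]]; exists (c * m), (c * r).
  by rewrite mulrDr mulrA; split => //; exact: idealMl.
Qed.

Lemma ideal_adjoin_sub M a x : M x -> ideal_adjoin M a x.
Proof. by move=> hx; exists x, 0; rewrite mul0r addr0. Qed.

Lemma ideal_adjoin_gen M a : is_ideal M -> ideal_adjoin M a a.
Proof. by move=> hM; exists 0, 1; rewrite mul1r add0r; split => //; exact: ideal0. Qed.

Lemma maximal_ideal_prime M : maximal_ideal M -> prime_ideal M.
Proof.
case=> hM M1 maxM; split => // a b Mab.
have [Ma|nMa] := pselect (M a); [by left | right].
have [[m [r [hm e]]]|sub] :=
  maxM _ (ideal_adjoin_ideal a hM) (@ideal_adjoin_sub M a).
- have -> : b = m * b + r * (a * b) by rewrite mulrA -mulrDl -e mul1r.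
  by apply: idealD hM (idealMr _ hM hm) (idealMl _ hM Mab).
- by case: nMa; apply: sub; exact: ideal_adjoin_gen.
Qed.

Definition ideal_avoiding S I (J : set R) :=
  [/\ is_ideal J, (forall x, I x -> J x) & (forall x, J x -> ~ S x)].

Lemma exists_maximal_avoiding S I : ideal_avoiding S I I ->
  exists M, ideal_avoiding S I M /\
    forall J, ideal_avoiding S I J -> (forall x, M x -> J x) -> forall x, J x -> M x.
Proof.
move=> avI.
(* The empty set is admitted so that Zorn's lemma also applies to the empty chain. *)
pose P := fun J : set R => J = set0 \/ ideal_avoiding S I J.
have [A [PA maxA]] : exists A, P A /\ forall B, A `<` B -> ~ P B.
  apply: Zorn_bigcup => F FP Ftot.
  have avF J x : F J -> J x -> ideal_avoiding S I J.
    by move=> FJ Jx; case: (FP J FJ) => // eJ; rewrite eJ in Jx.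
  have [[J0 FJ0 avJ0]|nF] := pselect (exists2 J, F J & ideal_avoiding S I J).
  - right; have [hJ0 IJ0 _] := avJ0; split.
    + split; first by exists J0 => //; exact: ideal0.
      * move=> x y [J FJ Jx] [K FK Ky].
        have [hJ _ _] := avF J x FJ Jx; have [hK _ _] := avF K y FK Ky.
        case: (Ftot J K FJ FK) => sub.
        - by exists K => //; apply: idealD hK (sub x Jx) Ky.
        - by exists J => //; apply: idealD hJ Jx (sub y Ky).
      * move=> c x [J FJ Jx]; exists J => //.
        by have [hJ _ _] := avF J x FJ Jx; exact: idealMl.
    + by move=> x Ix; exists J0 => //; exact: IJ0.
    + by move=> x [J FJ Jx]; have [_ _ JS] := avF J x FJ Jx; exact: JS.
  - left; apply/seteqP; split => // x [J FJ Jx].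
    by case: nF; exists J => //; exact: avF Jx.
have avA : ideal_avoiding S I A.
  case: PA => // eA; case: (maxA I); last by right.
  by rewrite eA; split => // /(_ 0); apply; case: avI => /ideal0.
exists A; split => // J avJ AJ x Jx; apply: contrapT => nAx.
by apply: (maxA J); [split => // JA; exact/nAx/JA | right].
Qed.

Lemma maximal_avoiding_prime S I M :
  S 1 -> (forall x y, S x -> S y -> S (x * y)) -> ideal_avoiding S I M ->
  (forall J, ideal_avoiding S I J -> (forall x, M x -> J x) -> forall x, J x -> M x) ->
  prime_ideal M.
Proof.
move=> S1 SM [hM IM MS] maxM; split => //; first by move/MS.
move=> a b Mab; apply: contrapT => /not_orP [nMa nMb].
have meetS z : ~ M z -> exists m r, M m /\ S (m + r * z).
  move=> nMz; apply: contrapT => nS; apply/nMz/(maxM (ideal_adjoin M z)).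
  - split; first exact: ideal_adjoin_ideal.
    + by move=> x /IM; exact: ideal_adjoin_sub.
    + by move=> _ [m [r [hm ->]]] Sx; apply: nS; exists m, r.
  - exact: ideal_adjoin_sub.
  - exact: ideal_adjoin_gen.
have [m1 [r1 [hm1 S1a]]] := meetS a nMa.
have [m2 [r2 [hm2 S2b]]] := meetS b nMb.
apply: (MS _ _ (SM _ _ S1a S2b)).
have -> : (m1 + r1 * a) * (m2 + r2 * b) =
   (m2 + r2 * b) * m1 + (r1 * a) * m2 + (r1 * r2) * (a * b) by ring.
by do 2?apply: idealD => //; apply: idealMl.
Qed.

Lemma exists_maximal_ideal_ge I : is_ideal I -> ~ I 1 ->
  exists M, maximal_ideal M /\ forall x, I x -> M x.
Proof.
move=> hI nI1.
have avI : ideal_avoiding (eq^~ 1) I I by split => // x Ix e; rewrite e in Ix.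
have [M [[hM IM MS] maxM]] := exists_maximal_avoiding avI.
exists M; split => //; split => //; first by move/MS.
move=> J hJ MJ; have [J1|nJ1] := pselect (J 1); [by left | right].
apply: maxM => //; split => // [x /IM /MJ //|x Jx e].
by rewrite e in Jx.
Qed.

End Ideals.

Section Jensen.
Variable R : comNzRingType.

Definition loc_principal (M : R -> Prop) (x : R) : R -> R -> Prop :=
  fun r s => ~ M s /\ exists y t, ~ M t /\ t * r = y * x.

Lemma loc_principal_ideal M x : prime_ideal M -> loc_ideal M (loc_principal M x).
Proof.
case=> _ M1 pM.
have nMM s s' : ~ M s -> ~ M s' -> ~ M (s * s') by move=> h h' /pM [].
split.
- by move=> r s [].
- move=> r s r' s' [ns [y [t [nt e]]]] ns' [t' [nt' e']].
  split => //; exists (t' * s' * y), (t * t' * s); split; first exact/nMM/ns/nMM.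
  have e2 : t' * (r' * s) = t' * (r * s').
    by apply/eqP; rewrite eq_sym -subr_eq0 -mulrBr e'.
  have -> : t * t' * s * r' = t * (t' * (r' * s)) by ring.
  by rewrite e2 -mulrA -e; ring.
- by split => //; exists 0, 1; rewrite mulr0 mul0r.
- move=> r s r' s' [ns [y [t [nt e]]]] [ns' [y' [t' [nt' e']]]].
  split; first exact: nMM.
  exists (t' * s' * y + t * s * y'), (t * t'); split; first exact: nMM.
  have -> : t * t' * (r * s' + r' * s) = t' * s' * (t * r) + t * s * (t' * r') by ring.
  by rewrite e e'; ring.
- move=> c u r s nu [ns [y [t [nt e]]]]; split; first exact: nMM.
  by exists (c * y), t; rewrite mulrCA e mulrA.
Qed.

Lemma arithmetic_jensen : arithmetic R ->
  forall a b : R, exists u c d, u * a = c * b /\ (1 - u) * b = d * a.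
Proof.
move=> ar a b.
pose I t := exists t1 t2, [/\ t = t1 + t2, divides b (t1 * a) & divides a (t2 * b)].
have hI : is_ideal I.
  split.
  - by exists 0, 0; rewrite addr0 !mul0r; split => //; exists 0; rewrite mul0r.
  - move=> _ _ [t1 [t2 [-> [c e1] [d e2]]]] [t1' [t2' [-> [c' e1'] [d' e2']]]].
    exists (t1 + t1'), (t2 + t2'); split; first ring.
    + by exists (c + c'); rewrite !mulrDl e1 e1'.
    + by exists (d + d'); rewrite !mulrDl e2 e2'.
  - move=> z _ [t1 [t2 [-> [c e1] [d e2]]]]; exists (z * t1), (z * t2).
    by split; [ring | exists (z * c) | exists (z * d)]; rewrite -!mulrA ?e1 ?e2.
have [[t1 [t2 [e [c e1] [d e2]]]]|nI1] := pselect (I 1).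
  by exists t1, c, d; rewrite [1]e addrAC subrr add0r.
(* Otherwise a maximal ideal M contains I, and comparing aR_M with bR_M puts a
   denominator t outside M into I. *)
have [M [maxM IM]] := exists_maximal_ideal_ge hI nI1.
have pM := maximal_ideal_prime maxM; have [_ M1 _] := pM.
have gen x : loc_principal M x x 1 by split => //; exists 1, 1; rewrite !mul1r.
case: (ar M maxM _ _ (loc_principal_ideal a pM) (loc_principal_ideal b pM)) => sub.
- have [_ [y [t [nt e]]]] := sub _ _ (gen a).
  by case: nt; apply: IM; exists t, 0; split; [rewrite addr0 | exists y | exists 0];
    rewrite ?mul0r.
- have [_ [y [t [nt e]]]] := sub _ _ (gen b).
  by case: nt; apply: IM; exists 0, t; split; [rewrite add0r | exists 0 | exists y];
    rewrite ?mul0r.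
Qed.

End Jensen.

Section ZeroDimensional.
Variable R : comNzRingType.

(* If no power of x were divisible by the next one, the multiplicative set of
   all x^n (1 - x r) would avoid 0, giving a prime P with x outside P; but P + xR
   lies in a maximal ideal, which equals P because R has dimension 0. *)
Lemma krull_dim0_pi_regular : krull_dim0 R ->
  forall x : R, exists n (y : R), x ^+ n.+1 = x ^+ n.+2 * y.
Proof.
move=> d0 x; apply: contrapT => nreg.
pose S z := exists n (r : R), z = x ^+ n * (1 - x * r).
have S1 : S 1 by exists 0%N, 0; rewrite expr0 mulr0 subr0 mulr1.
have SM a b : S a -> S b -> S (a * b).
  move=> [n [r ->]] [m [r' ->]]; exists (n + m)%N, (r + r' - x * r * r').
  by rewrite exprD; ring.
have av0 : ideal_avoiding S (eq^~ 0) (eq^~ 0).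
  split=> //; first by split=> [|a b -> ->|a b ->]; rewrite ?addr0 ?mulr0.
  move=> z -> [n [r e]].
  apply: nreg; exists n, r; apply/eqP; rewrite -subr_eq0; apply/eqP.
  by rewrite -[RHS](mulr0 x) e !exprS; ring.
have [P [avP maxP]] := exists_maximal_avoiding av0.
have pP := maximal_avoiding_prime S1 SM avP maxP.
have [hP _ PS] := avP.
have nPx1 : ~ ideal_adjoin P x 1.
  case=> m [r [hm e]]; apply: (PS m hm); exists 0%N, r.
  by rewrite expr0 mul1r e; ring.
have [Q [maxQ PQ]] := exists_maximal_ideal_ge (ideal_adjoin_ideal x hP) nPx1.
have Px : P x.
  apply: (d0 P Q pP (maximal_ideal_prime maxQ)) => [z Pz|].
    exact/PQ/ideal_adjoin_sub.
  exact/PQ/ideal_adjoin_gen.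
by apply: (PS x Px); exists 1%N, 0; rewrite expr1 mulr0 subr0 mulr1.
Qed.

Lemma pi_regular_idempotent (x y : R) n : x ^+ n.+1 = x ^+ n.+2 * y ->
  exists e w : R, [/\ e * e = e, e = x * w & (x * (1 - e)) ^+ n.+1 = 0].
Proof.
move=> reg.
have shift k : x ^+ n.+1 = x ^+ (n.+1 + k) * y ^+ k.
  elim: k => [|k IH]; first by rewrite addn0 expr0 mulr1.
  by rewrite {1}IH addnC exprD reg addSnnS addnC exprD !exprS; ring.
have xm := shift n.+1.
have xm1e : x ^+ n.+1 * (1 - x ^+ n.+1 * y ^+ n.+1) = 0.
  by rewrite mulrBr mulr1 mulrA -exprD -xm subrr.
exists (x ^+ n.+1 * y ^+ n.+1), (x ^+ n * y ^+ n.+1); split.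
- by rewrite [in RHS]xm exprD; ring.
- by rewrite exprS; ring.
- by rewrite exprMn (exprSr (1 - _)) mulrCA xm1e mulr0.
Qed.

Lemma krull_dim0_idempotent : krull_dim0 R -> forall x : R,
  exists e w : R, exists n, [/\ e * e = e, e = x * w & (x * (1 - e)) ^+ n = 0].
Proof.
move=> d0 x; have [n [y reg]] := krull_dim0_pi_regular d0 x.
by have [e [w [ee exw nil]]] := pi_regular_idempotent reg; exists e, w, n.+1.
Qed.

End ZeroDimensional.

Section IdempotentSplitting.
Variable R : comNzRingType.
Implicit Types (g x y p q N : R).

Lemma idem_mixM g x y p q : g * g = g ->
  (g * x + (1 - g) * y) * (g * p + (1 - g) * q) = g * (x * p) + (1 - g) * (y * q).
Proof.
move=> gg; have g1g : g * (1 - g) = 0 by rewrite mulrBr mulr1 gg subrr.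
have -> : (g * x + (1 - g) * y) * (g * p + (1 - g) * q) =
  (g * g) * (x * p) + (g * (1 - g)) * (x * q + y * p) + (1 - g - g * (1 - g)) * (y * q).
  by ring.
by rewrite gg g1g mul0r addr0 subr0.
Qed.

Lemma nilpotent_subr1_inv N n : N ^+ n = 0 -> (1 - N) * \sum_(i < n) N ^+ i = 1.
Proof. by move=> Nn; rewrite -opprB mulNr -subrX1 Nn sub0r opprK. Qed.

Definition idempotent_gcds :=
  forall a b : R, exists g, [/\ g * g = g,
    divides (g * b + (1 - g) * a) a & divides (g * b + (1 - g) * a) b].

(* With u a in bR and (1 - u) b in aR, take the idempotent g in uR with u(1 - g)
   nilpotent: on the g-component b divides a, on the (1 - g)-component 1 - u is a
   unit and a divides b. *)
Lemma arithmetic_dim0_idempotent_gcds :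
  arithmetic R -> krull_dim0 R -> idempotent_gcds.
Proof.
move=> ar d0 a b.
have [u [c [c' [uab uba]]]] := arithmetic_jensen ar a b.
have [g [w [n [gg guw nil]]]] := krull_dim0_idempotent d0 u.
have g1g : g - g * g = 0 by rewrite gg subrr.
exists g; split => //.
- exists (g * (w * c) + (1 - g) * 1); rewrite idem_mixM // mul1r.
  have -> : g * (w * c * b) = g * a.
    transitivity (g * w * (c * b)); first by ring.
    by rewrite -uab -[in RHS]gg {2}guw; ring.
  by ring.
- pose S := \sum_(i < n) (u * (1 - g)) ^+ i.
  have uS := nilpotent_subr1_inv nil; rewrite -/S in uS.
  exists (g * 1 + (1 - g) * (S * c')); rewrite idem_mixM // mul1r.
  have -> : (1 - g) * (S * c' * a) = (1 - g) * b.
    transitivity ((1 - g) * b * ((1 - u * (1 - g)) * S)); last by rewrite uS mulr1.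
    have -> : (1 - g) * b * ((1 - u * (1 - g)) * S) =
      S * (1 - g) * ((1 - u) * b) + S * u * b * (g - g * g) by ring.
    by rewrite g1g uba mulr0 addr0; ring.
  by ring.
Qed.

Lemma in_fg_ideal_nil y : in_fg_ideal [::] y <-> y = 0.
Proof.
split; first by case=> c ->; rewrite big_ord0.
by move=> ->; exists (fun _ => 0); rewrite big_ord0.
Qed.

Lemma in_fg_ideal_cons x s y : in_fg_ideal (x :: s) y <->
  exists c z, in_fg_ideal s z /\ y = c * x + z.
Proof.
split.
- case=> c ->; rewrite /= big_ord_recl /=.
  exists (c ord0), (\sum_(i < size s) c (lift ord0 i) * s`_i); split => //.
  by exists (fun i => c (lift ord0 i)).
- case=> c [z [[cz ->] ->]].
  exists (fun i : 'I_(size s).+1 => if unlift ord0 i is Some j then cz j else c).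
  rewrite /= big_ord_recl unlift_none /=; congr (_ + _).
  by apply: eq_bigr => i _; rewrite liftK.
Qed.

Lemma idempotent_gcds_bezout : idempotent_gcds -> bezout R.
Proof.
move=> gcds; elim=> [|x s [d IH]].
  exists 0 => y; rewrite in_fg_ideal_nil.
  by split=> [->|[c ->]]; [exists 0 | ]; rewrite mulr0.
have [g [gg [al dx] [be dd]]] := gcds x d.
move: dx dd; set D := g * d + _ => dx dd.
exists D => y; rewrite in_fg_ideal_cons; split.
- case=> c [z [/IH [c' ->] ->]]; exists (c * al + c' * be).
  by rewrite dx dd; ring.
- case=> c ->; exists (c * (1 - g)), (c * g * d); split; last by rewrite /D; ring.
  by apply/IH; exists (c * g).
Qed.

(* With e the idempotent attached to b, factor a = (e a + 1 - e)(e + (1 - e) a):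
   the first factor is a unit modulo bR, and any common divisor of the second
   factor with a unit modulo bR is a unit, since b is nilpotent on the
   (1 - e)-component. *)
Lemma idempotent_adequate_factor (a b e w : R) n :
  e * e = e -> e = b * w -> (b * (1 - e)) ^+ n = 0 ->
  exists r s : R, [/\ a = r * s, comaximal r b &
    forall s' : R, ~ is_unit s' -> divides s' s -> ~ comaximal s' b].
Proof.
move=> ee ebw nil.
have e1e : e * (1 - e) = 0 by rewrite mulrBr mulr1 ee subrr.
have ee' : (1 - e) * (1 - e) = 1 - e by rewrite mulrBr mulr1 mulrC e1e subr0.
exists (e * a + (1 - e) * 1), (e * 1 + (1 - e) * a); split.
- by rewrite idem_mixM // mul1r mulr1 -mulrDl addrC subrK mul1r.
- exists (1 - e), w.
  have -> : (1 - e) * (e * a + (1 - e) * 1) + w * b =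
    (e * (1 - e)) * a + (1 - e) * (1 - e) + b * w by ring.
  by rewrite e1e ee' -ebw mul0r add0r subrK.
- move=> s' nu [c sc] [u [v uv]]; apply: nu.
  pose N := v * (b * (1 - e)).
  have Nn : N ^+ n = 0 by rewrite /N exprMn nil mulr0.
  have NS := nilpotent_subr1_inv Nn; set S := \sum_(i < n) _ in NS.
  have cse : c * s' * e = e.
    have -> : c * s' * e = e * e + e * (1 - e) * a by rewrite -sc; ring.
    by rewrite ee e1e mul0r addr0.
  have eN : (1 - e) * N = N.
    have -> : (1 - e) * N = v * b * ((1 - e) * (1 - e)) by rewrite /N; ring.
    by rewrite ee' /N mulrA.
  exists (u * (1 - e) * S + c * e).
  have -> : s' * (u * (1 - e) * S + c * e) =
    (u * s' + v * b) * (1 - e) * S - N * S + c * s' * e by rewrite /N; ring.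
  rewrite uv cse mul1r -[X in _ - X * S]eN.
  have -> : (1 - e) * S - (1 - e) * N * S + e = (1 - e) * ((1 - N) * S) + e by ring.
  by rewrite NS mulr1 subrK.
Qed.

End IdempotentSplitting.

Section Matrices.
Variable R : comNzRingType.

Lemma invertible_mx1 n : invertible_mx (1%:M : 'M[R]_n).
Proof. by exists 1%:M; rewrite mul1mx. Qed.

Lemma invertible_mxM n (P Q : 'M[R]_n) :
  invertible_mx P -> invertible_mx Q -> invertible_mx (P *m Q).
Proof.
move=> [P' [PP' P'P]] [Q' [QQ' Q'Q]]; exists (Q' *m P'); split.
- by rewrite mulmxA -(mulmxA P) QQ' mulmx1 PP'.
- by rewrite mulmxA -(mulmxA Q') P'P mulmx1 Q'Q.
Qed.

Lemma invertible_tperm_mx n (i j : 'I_n) : invertible_mx (tperm_mx i j : 'M[R]_n).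
Proof. by exists (tperm_mx i j); rewrite /tperm_mx -perm_mxM tperm2 perm_mx1. Qed.

Lemma idem_mix_mulmx (g : R) m n p (X1 X2 : 'M[R]_(m, n)) (Y1 Y2 : 'M[R]_(n, p)) :
  g * g = g ->
  (g *: X1 + (1 - g) *: X2) *m (g *: Y1 + (1 - g) *: Y2) =
  g *: (X1 *m Y1) + (1 - g) *: (X2 *m Y2).
Proof.
move=> gg; have g1g : g * (1 - g) = 0 by rewrite mulrBr mulr1 gg subrr.
have g1g' : (1 - g) * g = 0 by rewrite mulrC.
have gg' : (1 - g) * (1 - g) = 1 - g by rewrite mulrBr mulr1 g1g' subr0.
rewrite !mulmxDl !mulmxDr -!scalemxAl -!scalemxAr !scalerA gg g1g g1g' gg'.
by rewrite !scale0r addr0 add0r.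
Qed.

Lemma invertible_mx_idem_mix (g : R) n (P1 P2 : 'M[R]_n) : g * g = g ->
  invertible_mx P1 -> invertible_mx P2 -> invertible_mx (g *: P1 + (1 - g) *: P2).
Proof.
move=> gg [P1' [h1 h2]] [P2' [h3 h4]].
exists (g *: P1' + (1 - g) *: P2'); rewrite !idem_mix_mulmx // h1 h2 h3 h4.
by rewrite -!scalerDl addrC subrK scale1r.
Qed.

Lemma dividesD (d x y : R) : divides d x -> divides d y -> divides d (x + y).
Proof. by move=> [a ->] [b ->]; exists (a + b); rewrite mulrDl. Qed.

Lemma dividesMl (d c x : R) : divides d x -> divides d (c * x).
Proof. by move=> [a ->]; exists (c * a); rewrite mulrA. Qed.

Lemma divides_trans (d e x : R) : divides d e -> divides e x -> divides d x.
Proof. by move=> [a ->] [b ->]; exists (b * a); rewrite mulrA. Qed.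

Lemma divides_sum (d : R) n (F : 'I_n -> R) :
  (forall i, divides d (F i)) -> divides d (\sum_(i < n) F i).
Proof.
by move=> dF; elim/big_ind: _ => //; [exists 0; rewrite mul0r | exact: dividesD].
Qed.

Lemma divides_mulmx (d : R) m n p q (P : 'M[R]_(m, n)) (A : 'M[R]_(n, p))
    (Q : 'M[R]_(p, q)) :
  (forall i j, divides d (A i j)) -> forall i j, divides d ((P *m A *m Q) i j).
Proof.
move=> dA i j; rewrite mxE; apply: divides_sum => k; rewrite mulrC; apply: dividesMl.
by rewrite mxE; apply: divides_sum => l; apply/dividesMl/dA.
Qed.

Lemma is_diagonal_block m n (u : 'M[R]_1) (X : 'M[R]_(m, n)) :
  is_diagonal X -> is_diagonal (block_mx u 0 0 X : 'M_(1 + m, 1 + n)).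
Proof.
move=> dX i j; rewrite -(splitK i) -(splitK j).
case: (split i) => i'; case: (split j) => j' /= neq.
- by case: neq; rewrite !ord1.
- by rewrite block_mxEur mxE.
- by rewrite block_mxEdl mxE.
- by rewrite block_mxEdr; apply: dX => e; apply: neq; rewrite /= e.
Qed.

Lemma invertible_block1 n (P : 'M[R]_n) : invertible_mx P ->
  invertible_mx (block_mx 1%:M 0 0 P : 'M_(1 + n)).
Proof.
move=> [P' [h1 h2]]; exists (block_mx 1%:M 0 0 P').
rewrite !mulmx_block !mul1mx !mulmx1 !mul0mx !mulmx0 !addr0 !add0r h1 h2.
by rewrite -!scalar_mx_block.
Qed.

Lemma invertible_block_lower m (be : 'M[R]_(m, 1)) :
  invertible_mx (block_mx 1%:M 0 be 1%:M : 'M_(1 + m)).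
Proof.
exists (block_mx 1%:M 0 (- be) 1%:M).
rewrite !mulmx_block !mul1mx !mulmx1 !mul0mx !mulmx0 !addr0 !add0r.
by rewrite addNr addrN -!scalar_mx_block.
Qed.

Lemma invertible_block_upper n (al : 'M[R]_(1, n)) :
  invertible_mx (block_mx 1%:M al 0 1%:M : 'M_(1 + n)).
Proof.
exists (block_mx 1%:M (- al) 0 1%:M).
rewrite !mulmx_block !mul1mx !mulmx1 !mul0mx !mulmx0 !addr0 !add0r.
by rewrite addNr addrN -!scalar_mx_block.
Qed.

End Matrices.

Section DiagonalReduction.
Variable R : comNzRingType.

Definition corner_pivots := forall m n (A : 'M[R]_(m.+1, n.+1)), exists P Q,
  [/\ invertible_mx P, invertible_mx Q &
      forall i j, divides ((P *m A *m Q) 0 0) ((P *m A *m Q) i j)].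

Lemma idempotent_gcds_corner_pivots : idempotent_gcds R -> corner_pivots.
Proof.
move=> gcds m n A.
suff /(_ (enum [set: 'I_m.+1 * 'I_n.+1])) [P [Q [hP hQ dA]]] :
  forall s : seq ('I_m.+1 * 'I_n.+1), exists P Q,
  [/\ invertible_mx P, invertible_mx Q &
     forall p, p \in s -> divides ((P *m A *m Q) 0 0) (A p.1 p.2)].
  exists P, Q; split => //; apply: divides_mulmx => i j.
  by apply: (dA (i, j)); rewrite mem_enum in_setT.
(* Absorb the entries one at a time: mixing the current transformations with the
   transpositions bringing the next entry to the corner, along an idempotent, puts
   a common divisor of the old corner and that entry in the corner. *)
elim=> [|p s [P [Q [hP hQ dA]]]].
  by exists 1%:M, 1%:M; split => //; exact: invertible_mx1.
set d := (P *m A *m Q) 0 0.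
have [g [gg dd dp]] := gcds d (A p.1 p.2).
exists (g *: tperm_mx 0 p.1 + (1 - g) *: P), (g *: tperm_mx 0 p.2 + (1 - g) *: Q).
split; try exact: invertible_mx_idem_mix (invertible_tperm_mx _ _ _) _.
have -> : ((g *: tperm_mx 0 p.1 + (1 - g) *: P) *m A *m
          (g *: tperm_mx 0 p.2 + (1 - g) *: Q)) 0 0 = g * A p.1 p.2 + (1 - g) * d.
  rewrite mulmxDl -!scalemxAl idem_mix_mulmx // -xrowE -xcolE.
  by rewrite !mxE !tpermL /d mxE.
move=> q; rewrite inE => /orP [/eqP -> //| qs].
exact: divides_trans dd (dA q qs).
Qed.

Lemma corner_clear m n (B : 'M[R]_(1 + m, 1 + n)) :
  (forall i j, divides (B 0 0) (B i j)) ->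
  exists (L : 'M[R]_(1 + m)) (U : 'M[R]_(1 + n)) (D : 'M[R]_(m, n)),
    [/\ invertible_mx L, invertible_mx U & L *m B *m U = block_mx (ulsubmx B) 0 0 D].
Proof.
move=> dB; set u := ulsubmx B.
have du i j : divides (B (lshift m 0) (lshift n 0)) (B i j).
  by have := dB i j; congr (divides (B _ _) _); apply: val_inj.
have [f hf] : exists f : 'I_n -> R, forall j, ursubmx B 0 j = f j * u 0 0.
  apply: (@fin_all_exists _ (fun=> R) (fun j c => ursubmx B 0 j = c * u 0 0)) => j.
  by rewrite !mxE; apply: du.
have [h hh] : exists h : 'I_m -> R, forall i, dlsubmx B i 0 = h i * u 0 0.
  apply: (@fin_all_exists _ (fun=> R) (fun i c => dlsubmx B i 0 = c * u 0 0)) => i.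
  by rewrite !mxE; apply: du.
pose al : 'M[R]_(1, n) := \row_j f j.
pose be : 'M[R]_(m, 1) := \col_i h i.
have ur : ursubmx B = u *m al.
  by apply/matrixP => i j; rewrite (ord1 i) hf [RHS]mxE big_ord1 [al _ _]mxE mulrC.
have dl : dlsubmx B = be *m u.
  by apply/matrixP => i j; rewrite (ord1 j) hh [RHS]mxE big_ord1 [be _ _]mxE.
exists (block_mx 1%:M 0 (- be) 1%:M), (block_mx 1%:M (- al) 0 1%:M).
exists (drsubmx B - be *m u *m al).
split; [exact: invertible_block_lower | exact: invertible_block_upper |].
rewrite -[B in LHS]submxK ur dl !mulmx_block.
rewrite !mul1mx !mulmx1 !mul0mx !mulmx0 !mulNmx !mulmxN ?addr0 ?add0r.
by rewrite !addNr mul0mx oppr0 add0r addrC mulmxA.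
Qed.

Lemma corner_pivots_kaplansky : corner_pivots -> kaplansky R.
Proof.
move=> piv m; elim: m => [|m IH] n A.
  by exists 1%:M, 1%:M; split; [exact: invertible_mx1 | exact: invertible_mx1 | case].
case: n A => [|n] A.
  by exists 1%:M, 1%:M; split; [exact: invertible_mx1 | exact: invertible_mx1 | move=> i []].
have [P0 [Q0 [hP0 hQ0 dB]]] := piv _ _ A.
have [L [U [D [hL hU eB]]]] := corner_clear dB.
have [P [Q [hP hQ dD]]] := IH n D.
exists (block_mx 1%:M 0 0 P *m L *m P0), (Q0 *m U *m block_mx 1%:M 0 0 Q).
split.
- by rewrite -mulmxA; apply/invertible_mxM/invertible_mxM => //; exact: invertible_block1.
- by apply/invertible_mxM/invertible_block1/hQ; exact: invertible_mxM.
- have -> : block_mx 1%:M 0 0 P *m L *m P0 *m A *m (Q0 *m U *m block_mx 1%:M 0 0 Q)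
    = block_mx 1%:M 0 0 P *m (L *m (P0 *m A *m Q0) *m U) *m block_mx 1%:M 0 0 Q.
    by rewrite !mulmxA.
  rewrite eB.
  rewrite !mulmx_block !mul1mx !mulmx1 !mul0mx !mulmx0 !addr0 !add0r mul0mx.
  exact: is_diagonal_block.
Qed.

End DiagonalReduction.

Theorem theorem3p6 (R : comNzRingType) :
  arithmetic R -> krull_dim0 R -> kaplansky R /\ adequate R.
Proof.
move=> ar d0; have gcds := arithmetic_dim0_idempotent_gcds ar d0.
split; first exact/corner_pivots_kaplansky/idempotent_gcds_corner_pivots.
split=> [|a b _]; first exact: idempotent_gcds_bezout.
have [e [w [n [ee ebw nil]]]] := krull_dim0_idempotent d0 b.
exact: idempotent_adequate_factor ee ebw nil.
Qed.
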